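(* Let $S_{r,N}$ be an atomic exponential Puiseux semiring. Then for every positive integer $k$, the set $\mathcal{U}_k(S_{r,N})$ is an arithmetic sequence with difference $|\mathsf{n}(r)-\mathsf{d}(r)|$ (i.e., a set of consecutive terms of an arithmetic progression with that common difference).
   Context: $\mathbb{N}=\{0,1,2,\dots\}$. A numerical monoid $N$ is an additive submonoid of $\mathbb{N}$ with finite complement in $\mathbb{N}$. For $r\in\mathbb{Q}_{>0}$ write $r=\mathsf{n}(r)/\mathsf{d}(r)$ in lowest terms. The exponential Puiseux semiring $S_{r,N}$ is the additive submonoid of $\mathbb{Q}_{\ge0}$ generated by $\{r^k:k\in N\}$; if $r\in\mathbb{N}$ it equals $\mathbb{N}$; if $r\notin\mathbb{N}$ it is atomic iff $\mathsf{n}(r)>1$, with atoms $r^s$, $s\in N$. For an atomic monoid $M$ and a positive integer $k$, $\mathcal{U}_k(M)$ is the set of positive integers $m$ for which there exist atoms $a_1,\dots,a_k,a'_1,\dots,a'_m$ with $a_1+\cdots+a_k=a'_1+\cdots+a'_m$. *)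

From mathcomp Require Import all_boot all_order all_algebra.
Set Implicit Arguments. Unset Strict Implicit. Unset Printing Implicit Defensive.
Import Order.TTheory GRing.Theory Num.Theory.
Local Open Scope ring_scope.

Definition numerical_monoid (N : nat -> Prop) : Prop :=
  [/\ N 0%N,
      (forall a b, N a -> N b -> N (a + b)%N) &
      (exists B : nat, forall n, (B <= n)%N -> N n)].

Definition expPuiseux (r : rat) (N : nat -> Prop) (x : rat) : Prop :=
  exists s : seq nat, (forall k, k \in s -> N k) /\ x = \sum_(k <- s) r ^+ k.

Definition atom (M : rat -> Prop) (a : rat) : Prop :=
  [/\ M a, a != 0 &
      forall b c, M b -> M c -> a = b + c -> b = 0 \/ c = 0].

Definition atomic (M : rat -> Prop) : Prop :=
  forall x, M x -> x != 0 ->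
    exists s : seq rat, (forall a, a \in s -> atom M a) /\ x = \sum_(a <- s) a.

Definition Uk (M : rat -> Prop) (k : nat) (m : nat) : Prop :=
  (0 < m)%N /\
  exists s t : seq rat,
    [/\ size s = k, size t = m,
        (forall a, a \in s -> atom M a), (forall a, a \in t -> atom M a) &
        \sum_(a <- s) a = \sum_(a <- t) a].

Definition arith_seq (U : nat -> Prop) (d : nat) : Prop :=
  exists a : nat,
    (exists L : nat, forall m, U m <-> exists2 i, (i <= L)%N & m = (a + i * d)%N)
    \/ (forall m, U m <-> exists i, m = (a + i * d)%N).

From mathcomp Require Import all_boot all_order all_algebra zify.
From Stdlib Require Import Classical Wf_nat.
Set Implicit Arguments. Unset Strict Implicit. Unset Printing Implicit Defensive.

(* Write r = n / d in lowest terms.  If d = 1, then S_{r,N} is the semiring of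
   naturals, whose only atom is 1, so U_k = {k}.  If n = 1 < d, every generator
   r ^ j splits inside S_{r,N}, so there are no atoms and the hypothesis of
   atomicity fails.  In the main case n, d > 1 the atoms are exactly the r ^ k
   with k in N, so factorizations are lists of exponents.  The basic move
   trades n copies of r ^ a for d copies of r ^ a.+1; it preserves the value
   and changes the length by |n - d|.  After clearing denominators, a
   divisibility argument shows that in two equal-valued lists without common
   exponent the least exponent occurs a multiple of n times and can be traded;
   an induction on a potential then shows that the lengths of two equal-valued
   lists are the ends of a run, of step |n - d|, of lengths of equal-valued
   lists (linked_sizes).  Shifting exponents above the conductor of N keeps
   all exponents in N, so every element of U_k is joined to k by such a run
   inside U_k, and a nonempty set with this property is an arithmetic sequence
   (arith_seq_of_linked). *)

Definition run (e : nat) (Q : nat -> Prop) (b j : nat) : Prop :=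
  forall i, i <= j -> Q (b + i * e).

Definition linked (e : nat) (Q : nat -> Prop) (x z : nat) : Prop :=
  exists j, (z = x + j * e /\ run e Q x j) \/ (x = z + j * e /\ run e Q z j).

Lemma linked_refl e (Q : nat -> Prop) x : Q x -> linked e Q x x.
Proof.
move=> Qx; exists 0; left; split=> [|i]; first by rewrite addn0.
by rewrite leqn0 => /eqP ->; rewrite addn0.
Qed.

Lemma linked_sym e Q x z : linked e Q x z -> linked e Q z x.
Proof. by case=> j [H|H]; exists j; [right|left]. Qed.

Lemma linked_mono e (Q Q' : nat -> Prop) x z :
  (forall m, Q m -> Q' m) -> linked e Q x z -> linked e Q' x z.
Proof.
by move=> QQ' [j [[-> R]|[-> R]]]; exists j; [left|right]; split=> // i /R /QQ'.
Qed.

Lemma linked_succ e (Q Q' : nat -> Prop) x z :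
  (forall m, Q m -> Q' m.+1) -> linked e Q x z -> linked e Q' x.+1 z.+1.
Proof.
move=> QQ' [j [[-> R]|[-> R]]]; exists j; [left|right];
  by split=> [|i /R /QQ']; rewrite ?addSn.
Qed.

Lemma linked_step e (Q : nat -> Prop) x y z :
  Q x -> y = x + e \/ x = y + e -> linked e Q y z -> linked e Q x z.
Proof.
move=> Qx xy [j [[zE R]|[yE R]]].
- case: xy => xy.
  + exists j.+1; left; split; first by rewrite mulSn; lia.
    by case=> [_|i /R]; rewrite ?addn0 // mulSn xy addnA.
  + case: j zE R => [|j] zE R.
    * rewrite mul0n addn0 in zE; subst z.
      exists 1; right; split; first lia.
      case=> [|[|//]] _; last by rewrite mul1n -xy.
      by have := R 0 (leqnn 0).
    * exists j; left; split; first by rewrite mulSn in zE; lia.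
      by move=> i /(R i.+1); rewrite mulSn addnA -xy.
- case: xy => xy.
  + case: j yE R => [|j] yE R.
    * rewrite mul0n addn0 in yE; rewrite yE in xy.
      exists 1; left; split; first lia.
      case=> [|[|//]] _; first by rewrite addn0.
      by rewrite mul1n -xy; have := R 0 (leqnn 0); rewrite addn0.
    * exists j; right; split; first by rewrite mulSn in yE; lia.
      by move=> i ij; apply: R; lia.
  + exists j.+1; right; split; first by rewrite mulSn; lia.
    move=> i; rewrite leq_eqVlt => /orP [/eqP ->|]; last exact: R.
    by rewrite mulSn addnCA -yE addnC -xy.
Qed.

Lemma downward_closed_nat (T : nat -> Prop) :
  T 0 -> (forall i j, j <= i -> T i -> T j) ->
  (exists L, forall i, T i <-> i <= L) \/ (forall i, T i).
Proof.
move=> T0 Tdown; case: (classic (exists b, ~ T b)) => [[b Tb]|]; last first.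
  by move=> allT; right=> i; apply: NNPP => Ti; apply: allT; exists i.
left; have Tlt : forall i, T i -> i < b.
  by move=> i Ti; rewrite ltnNge; apply/negP => bi; apply: Tb (Tdown _ _ bi Ti).
elim: b {Tb} Tlt => [|b IH] Tlt; first by have := Tlt 0 T0.
case: (classic (T b)) => [Tb|nTb].
  by exists b => i; split=> [/Tlt|/Tdown]; last exact.
apply: IH => i Ti; have := Tlt i Ti; rewrite ltnS leq_eqVlt => /orP [/eqP ib|//].
by move: Ti; rewrite ib.
Qed.

Lemma arith_seq_singleton (U : nat -> Prop) k e :
  (forall m, U m <-> m = k) -> arith_seq U e.
Proof.
move=> Uk; exists k; left; exists 0 => m; rewrite Uk.
split=> [->|[i]]; first by exists 0; rewrite ?mul0n ?addn0.
by rewrite leqn0 => /eqP -> ->; rewrite mul0n addn0.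
Qed.

Lemma linked_from_min e (U : nat -> Prop) k a : 0 < e ->
  U a -> (forall m, U m -> a <= m) -> (forall m, U m -> linked e U k m) ->
  forall m, U m -> exists i, m = a + i * e /\ run e U a i.
Proof.
move=> e0 Ua amin Ulink.
have [j0 [kE Ra]] : exists j0, k = a + j0 * e /\ run e U a j0.
  case: (Ulink a Ua) => j [[aE R]|]; last by exists j.
  have ak : a <= k by apply: amin; have := R 0 (leq0n j); rewrite mul0n addn0.
  exists 0; split; first lia.
  by move=> i; rewrite leqn0 => /eqP ->; rewrite addn0.
move=> m /Ulink [j [[mE R]|[kE' R]]].
- exists (j0 + j); split; first by rewrite mulnDl; lia.
  move=> i ij; case: (leqP i j0) => [|j0i]; first exact: Ra.
  have := R (i - j0) ltac:(lia); congr U; rewrite mulnBl kE; nia.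
- have am : a <= m by apply: amin; have := R 0 (leq0n j); rewrite mul0n addn0.
  have jj0 : j <= j0 by rewrite -(leq_pmul2r e0); lia.
  exists (j0 - j); split; first by rewrite mulnBl; nia.
  by move=> i ij; apply: Ra; lia.
Qed.

Lemma arith_seq_of_linked (U : nat -> Prop) k e :
  U k -> (forall m, U m -> linked e U k m) -> arith_seq U e.
Proof.
move=> Uk Ulink; case: (posnP e) => [e0|e_gt0].
  apply: (arith_seq_singleton (k := k)) => m; split=> [|-> //].
  by case/Ulink => j [[]|[]]; rewrite e0 muln0 addn0 => ->.
have [a [[Ua /= amin] _]] :=
  dec_inh_nat_subset_has_unique_least_element U (fun m => classic (U m)) (ex_intro _ k Uk).
have {}amin m : U m -> a <= m by move/amin/leP.
have Urun := linked_from_min e_gt0 Ua amin Ulink.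
have Tdown i j : j <= i -> U (a + i * e) -> U (a + j * e).
  move=> ji /Urun [i' [/eqP ii' R]]; apply: R.
  by move: ii'; rewrite eqn_add2l eqn_pmul2r // => /eqP <-.
exists a; case: (downward_closed_nat (T := fun i => U (a + i * e))) => //.
- by rewrite mul0n addn0.
- move=> [L TL]; left; exists L => m; split.
    by case/Urun => i [-> R]; exists i; rewrite // -TL; apply: R.
  by case=> i iL ->; apply/TL.
- move=> Tall; right=> m; split; last by case=> i ->.
  by case/Urun => i [-> _]; exists i.
Qed.

Lemma exchange_size n d x y :
  x + n = y + d -> x = y + `|n - d| \/ y = x + `|n - d|.
Proof.
case: (leqP d n) => [dn|/ltnW nd]; first by rewrite distnEl //; lia.
by rewrite distnEr //; lia.
Qed.

Lemma sum_count_split (f : nat -> nat) a (s : seq nat) :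
  \sum_(x <- s) f x = count_mem a s * f a + \sum_(x <- filter (predC1 a) s) f x.
Proof.
elim: s => [|x s IH]; first by rewrite big_nil.
rewrite /= !big_cons IH; case: eqP => [->|_] /=; first by rewrite mulSn addnA.
by rewrite big_cons addnCA.
Qed.

Lemma sum_nseq (f : nat -> nat) c a : \sum_(x <- nseq c a) f x = c * f a.
Proof. by rewrite big_nseq iter_addn_0 mulnC. Qed.

Section ExponentMultisets.

(* A sum of powers of r = n / d with exponents in [lo, M] is encoded by the
   sequence of its exponents; multiplied by d ^ M it becomes an integer. *)
Variables n d M : nat.
Hypotheses (n_gt0 : 0 < n) (d_gt0 : 0 < d) (coprime_nd : coprime n d).

(* d ^ M * r ^ x, for x <= M. *)
Definition weight (x : nat) : nat := n ^ x * d ^ (M - x).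

(* d ^ M times the sum of the powers of r with exponents in s. *)
Definition cval (s : seq nat) : nat := \sum_(x <- s) weight x.

(* A measure that decreases when n copies of r ^ a are traded for d copies of
   r ^ a.+1 (as n * (d + 1) > d); it drives the inductions below. *)
Definition potential (s : seq nat) : nat := \sum_(x <- s) d.+1 ^ (M - x).

Definition bounded (lo : nat) (s : seq nat) : bool := all (fun x => lo <= x <= M) s.

Lemma weight_gt0 x : 0 < weight x.
Proof. by rewrite muln_gt0 !expn_gt0 n_gt0 d_gt0. Qed.

Lemma cval_cons x s : cval (x :: s) = weight x + cval s.
Proof. exact: big_cons. Qed.

Lemma cval_perm s t : perm_eq s t -> cval s = cval t.
Proof. exact: perm_big. Qed.

Lemma cval_eq0 s : cval s = 0 -> s = [::].
Proof. by case: s => [|x s] //; rewrite cval_cons; have := weight_gt0 x; lia. Qed.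

Lemma potential_perm s t : perm_eq s t -> potential s = potential t.
Proof. exact: perm_big. Qed.

Lemma potential_cons x s : potential (x :: s) = d.+1 ^ (M - x) + potential s.
Proof. exact: big_cons. Qed.

Lemma bounded_sub lo s t : {subset t <= s} -> bounded lo s -> bounded lo t.
Proof. by move=> ts /allP sb; apply/allP => x /ts /sb. Qed.

Lemma cval_dvd a s : all (fun x => a < x) s -> n ^ a.+1 %| cval s.
Proof.
elim: s => [|x s IH] /=; first by rewrite /cval big_nil dvdn0.
case/andP => ax /IH dvd_s; rewrite cval_cons dvdn_add // dvdn_mulr //.
exact: dvdn_exp2l.
Qed.

(* If a is the least exponent of u ++ v and occurs only in u, then comparing
   both sides modulo n ^ a.+1 shows that n divides its multiplicity in u. *)
Lemma count_min_dvd a u v : a \notin v -> all (fun x => a <= x) (u ++ v) ->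
  cval u = cval v -> n %| count_mem a u.
Proof.
move=> av; rewrite all_cat => /andP [au bv] E.
have above s : a \notin s -> all (fun x => a <= x) s -> all (fun x => a < x) s.
  move=> as_ /allP ge_a; apply/allP => x xs; rewrite ltn_neqAle ge_a // andbT.
  by apply: contraNneq as_ => ->.
have dvd_v : n ^ a.+1 %| cval v by apply: cval_dvd; apply: above.
have dvd_rest : n ^ a.+1 %| cval (filter (predC1 a) u).
  apply: cval_dvd; apply: above; first by rewrite mem_filter /= eqxx.
  by apply/allP => x; rewrite mem_filter => /andP [_ /(allP au)].
move: dvd_v; rewrite -E /cval (sum_count_split _ a) -/(cval _) dvdn_addl //.
rewrite /weight expnSr mulnCA dvdn_pmul2l ?expn_gt0 ?n_gt0 //.
by rewrite Gauss_dvdl // coprimeXr.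
Qed.

(* Trade n copies of the exponent a for d copies of a.+1: as
   n * r ^ a = d * r ^ a.+1, this preserves the value. *)
Definition exchange (a : nat) (s : seq nat) : seq nat :=
  nseq d a.+1 ++ nseq (count_mem a s - n) a ++ filter (predC1 a) s.

Section Exchange.

Variables (a : nat) (s : seq nat).
Hypotheses (a_lt_M : a < M) (n_le_count : n <= count_mem a s).

Lemma cval_exchange : cval (exchange a s) = cval s.
Proof.
rewrite /cval !big_cat /= !sum_nseq [in RHS](sum_count_split _ a) /weight.
have [k Mk] : exists k, M - a = k.+1 by exists (M - a.+1); lia.
have -> : M - a.+1 = k by lia.
rewrite Mk !expnS; set c := count_mem a s; set F := \sum_(_ <- _) _.
have -> : c = c - n + n by lia.
rewrite addnK; nia.
Qed.

Lemma size_exchange : size (exchange a s) + n = size s + d.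
Proof.
rewrite !size_cat !size_nseq size_filter.
have : count_mem a s + count (predC1 a) s = size s by apply: count_predC.
move: n_le_count; set c := count_mem a s; set f := count (predC1 a) s; lia.
Qed.

Lemma potential_exchange : potential (exchange a s) < potential s.
Proof.
rewrite /potential !big_cat /= !sum_nseq [in X in _ < X](sum_count_split _ a).
have [k Mk] : exists k, M - a = k.+1 by exists (M - a.+1); lia.
have -> : M - a.+1 = k by lia.
rewrite Mk expnS; set c := count_mem a s; set F := \sum_(_ <- _) _.
have p_gt0 : 0 < d.+1 ^ k by rewrite expn_gt0.
have -> : c = c - n + n by lia.
rewrite addnK; nia.
Qed.

Lemma bounded_exchange lo : lo <= a -> bounded lo s -> bounded lo (exchange a s).
Proof.
move=> lo_a /allP s_lo; rewrite /bounded !all_cat; apply/and3P; split.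
- by apply/allP => x /nseqP [-> _]; apply/andP; split; lia.
- by apply/allP => x /nseqP [-> _]; apply/andP; split; lia.
- by apply/allP => x; rewrite mem_filter => /andP [_ /s_lo].
Qed.

Lemma count_exchange : d <= count_mem a.+1 (exchange a s).
Proof. by rewrite !count_cat count_nseq /= eqxx mul1n leq_addr. Qed.

End Exchange.

Lemma least_exponent_exchangeable lo a u v :
  bounded lo v -> v != [::] -> a \in u -> a \notin v ->
  all (fun x => a <= x) (u ++ v) -> cval u = cval v ->
  n <= count_mem a u /\ a < M.
Proof.
move=> bv vn0 au av amin E; split.
  by apply: dvdn_leq; [rewrite -has_count has_pred1 | exact: count_min_dvd E].
case: v vn0 bv av amin {E} => [|y v] // _ /andP [/andP [_ yM] _].
rewrite in_cons negb_or => /andP [ya _] /allP amin.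
by rewrite (leq_trans _ yM) // ltn_neqAle ya amin // mem_cat mem_head orbT.
Qed.

Definition realizes (lo c m : nat) : Prop :=
  exists w, [/\ bounded lo w, cval w = c & size w = m].

(* The heart of the argument: the lengths of two equal-valued sums are the
   ends of a run of difference `|n - d| of lengths of equal-valued sums.
   By induction on the potential: cancel a common exponent, or else exchange
   the least exponent, which lies on one side only. *)
Lemma linked_sizes lo u v : bounded lo u -> bounded lo v -> cval u = cval v ->
  linked `|n - d| (realizes lo (cval u)) (size u) (size v).
Proof.
move: {2}(potential u + potential v).+1 (ltnSn (potential u + potential v)) => m.
elim: m u v => [|m IH] u v // Hm bu bv E.
have [u0|un0] := eqVneq u [::].
  have v0 : v = [::] by apply: cval_eq0; rewrite -E u0 /cval big_nil.
  by rewrite u0 v0; apply: linked_refl; exists [::]; rewrite /cval big_nil.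
have vn0 : v != [::].
  by apply/eqP => v0; move/eqP: un0; apply; apply: cval_eq0; rewrite E v0 /cval big_nil.
case: (boolP (has (mem v) u)) => [/hasP [c cu cv]|disj].
  have [pu pv] := (perm_to_rem cu, perm_to_rem cv).
  have := potential_perm pu; have := potential_perm pv.
  rewrite !potential_cons => Pv Pu.
  rewrite (perm_size pu) (perm_size pv) (cval_perm pu) cval_cons.
  apply: (linked_succ _ (IH _ _ _ _ _ _)); last 4 first.
  - by rewrite Pu Pv in Hm; have := expn_gt0 d.+1 (M - c); lia.
  - exact: bounded_sub (mem_rem (s := u)) bu.
  - exact: bounded_sub (mem_rem (s := v)) bv.
  - by move: E; rewrite (cval_perm pu) (cval_perm pv) !cval_cons => /addnI.
  move=> _ [w [bw <- <-]]; exists (c :: w); rewrite cval_cons; split=> //=.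
  by rewrite bw (allP bu).
have [a auv amin] : exists2 a, a \in u ++ v & all (fun x => a <= x) (u ++ v).
  case: u un0 {Hm bu E disj} => [|x u] // _.
  have [a auv amin] := ex_minnP (ex_intro (fun m => m \in (x :: u) ++ v) x (mem_head _ _)).
  by exists a => //; apply/allP.
wlog au : u v Hm bu bv E un0 vn0 disj auv amin / a \in u.
  move=> gen; have [|aNu] := boolP (a \in u); first exact: gen.
  have av : a \in v by move: auv; rewrite mem_cat (negbTE aNu).
  apply: linked_sym; rewrite E; apply: gen => //; first by rewrite addnC.
  - by rewrite has_sym.
  - by rewrite mem_cat av.
  - by rewrite all_cat andbC -all_cat.
have aNv : a \notin v by apply: contra disj => av; apply/hasP; exists a.
have [n_le a_lt] := least_exponent_exchangeable bv vn0 au aNv amin E.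
apply: (linked_step (y := size (exchange a u))); first by exists u.
  exact: exchange_size (size_exchange a_lt n_le).
rewrite -(cval_exchange a_lt n_le); apply: IH => //.
- by have := potential_exchange a_lt n_le; lia.
- by apply: bounded_exchange => //; move/allP: bu => /(_ a au) /andP [].
- by rewrite cval_exchange.
Qed.

(* By induction on the potential: otherwise the least exponent a lies
   below s, and exchanging it yields a sum equal to r ^ s, hence [:: s] by
   induction, although it contains d > 1 copies of a.+1. *)
Lemma cval_singleton s v : 1 < n -> 1 < d -> s <= M -> bounded 0 v ->
  cval v = cval [:: s] -> v = [:: s].
Proof.
move=> n_gt1 d_gt1 sM.
move: {2}(potential v).+1 (ltnSn (potential v)) => m.
elim: m v => [|m IH] v // Hm bv E.
have bs : bounded 0 [:: s] by rewrite /bounded /= sM.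
have [sv|sNv] := boolP (s \in v).
  have pv := perm_to_rem sv; move: E; rewrite (cval_perm pv) !cval_cons.
  move=> /addnI; rewrite [in RHS]/cval big_nil => /cval_eq0 rem0.
  by rewrite rem0 in pv; apply: perm_small_eq pv.
have s_in : s \in v ++ [:: s] by rewrite mem_cat mem_head orbT.
have [a avs amin] := ex_minnP (ex_intro (fun m => m \in v ++ [:: s]) s s_in).
have {}amin : all (fun x => a <= x) (v ++ [:: s]) by apply/allP.
have [av|aNv] := boolP (a \in v); last first.
  have as_ : a = s by move: avs; rewrite mem_cat (negbTE aNv) mem_seq1 => /eqP.
  have : n %| count_mem a [:: s].
    by apply: (count_min_dvd aNv); rewrite // all_cat andbC -all_cat.
  by rewrite as_ /= eqxx => /dvdn_leq; lia.
have aNs : a \notin [:: s] by rewrite mem_seq1; apply: contraNneq sNv => <-.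
have [n_le a_lt] := least_exponent_exchangeable bs isT av aNs amin E.
have exchanged : exchange a v = [:: s].
  apply: IH; last by rewrite cval_exchange.
    by have := potential_exchange a_lt n_le; lia.
  exact: bounded_exchange.
by have := count_exchange a v; rewrite exchanged /= addn0; case: eqP; lia.
Qed.

End ExponentMultisets.

Import Order.TTheory GRing.Theory Num.Theory.
Local Open Scope ring_scope.

Definition powsum (r : rat) (s : seq nat) : rat := \sum_(k <- s) r ^+ k.

Lemma powsum_cons r x s : powsum r (x :: s) = r ^+ x + powsum r s.
Proof. exact: big_cons. Qed.

Lemma powsum_gt0 r s : 0 < r -> s != [::] -> 0 < powsum r s.
Proof.
move=> r_gt0; case: s => [|x s] // _; rewrite powsum_cons ltr_wpDr ?exprn_gt0 //.
by apply: sumr_ge0 => i _; rewrite exprn_ge0 // ltW.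
Qed.

Lemma powsum_nseq r c x : powsum r (nseq c x) = c%:R * r ^+ x.
Proof.
elim: c => [|c IH]; first by rewrite /powsum big_nil mul0r.
by rewrite powsum_cons IH mulrS mulrDl mul1r.
Qed.

Lemma powsum_shift r t s : powsum r (map (addn t) s) = r ^+ t * powsum r s.
Proof. by rewrite /powsum big_map mulr_sumr; apply: eq_bigr => i _; rewrite exprD. Qed.

Lemma exponent_bound (s : seq nat) : exists M, all (fun x => (x <= M)%N) s.
Proof.
exists (\max_(x <- s) x)%N; apply/allP => x xs.
exact: (@leq_bigmax_seq _ s xpredT id x xs).
Qed.

Section ClearingDenominators.

Variables (n d M : nat).
Hypothesis d_gt0 : (0 < d)%N.

Lemma powsum_cval s : all (fun x => (x <= M)%N) s ->
  powsum (n%:R / d%:R) s * d%:R ^+ M = (cval n d M s)%:R.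
Proof.
elim: s => [|x s IH]; first by rewrite /powsum /cval !big_nil mul0r.
case/andP => xM /IH {}IH; rewrite powsum_cons cval_cons mulrDl IH natrD.
congr (_ + _); rewrite /weight -(subnKC xM) exprD expr_div_n mulrA divfK.
  by rewrite natrM !natrX addKn.
by rewrite expf_neq0 // pnatr_eq0 -lt0n.
Qed.

Lemma powsum_eq_cval s t :
  all (fun x => (x <= M)%N) s -> all (fun x => (x <= M)%N) t ->
  (powsum (n%:R / d%:R) s = powsum (n%:R / d%:R) t <-> cval n d M s = cval n d M t).
Proof.
move=> sM tM; have dM : d%:R ^+ M != 0 :> rat by rewrite expf_neq0 // pnatr_eq0 -lt0n.
split=> [E | /(congr1 (fun c : nat => c%:R : rat))].
  by apply/eqP; rewrite -(eqr_nat rat) -(powsum_cval sM) -(powsum_cval tM) E.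
by rewrite -(powsum_cval sM) -(powsum_cval tM) => /(mulIf dM).
Qed.

End ClearingDenominators.

Section Atoms.

Variables (r : rat) (N : nat -> Prop).
Hypothesis r_gt0 : 0 < r.

Lemma expPuiseux_powsum s : (forall k, k \in s -> N k) -> expPuiseux r N (powsum r s).
Proof. by exists s. Qed.

Lemma expPuiseux_pow k : N k -> expPuiseux r N (r ^+ k).
Proof.
move=> Nk; exists [:: k]; split; last by rewrite big_seq1.
by move=> x; rewrite mem_seq1 => /eqP ->.
Qed.

Lemma atom_is_power a : atom (expPuiseux r N) a -> exists2 k, N k & a = r ^+ k.
Proof.
case=> [[[|x s] [sN ->]]]; first by rewrite big_nil eqxx.
move=> _ a_atom; have Nx : N x by apply: sN; rewrite mem_head.
exists x => //; have [->|s_ne] := eqVneq s [::]; first by rewrite big_seq1.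
have Ns : forall k, k \in s -> N k by move=> k ks; apply: sN; rewrite in_cons ks orbT.
have [/eqP|/eqP] := a_atom _ _ (expPuiseux_pow Nx) (expPuiseux_powsum Ns) (big_cons _ _ _ _ _ _).
  by rewrite (gt_eqF (exprn_gt0 x r_gt0)).
by rewrite (gt_eqF (powsum_gt0 r_gt0 s_ne)).
Qed.

Lemma atoms_are_powers (s : seq rat) : (forall a, a \in s -> atom (expPuiseux r N) a) ->
  exists2 u : seq nat, (forall k, k \in u -> N k) & s = map (fun k => r ^+ k) u.
Proof.
elim: s => [|a s IH] s_atoms; first by exists [::].
have [k Nk ->] := atom_is_power (s_atoms a (mem_head a s)).
have [u uN ->] := IH (fun b bs => s_atoms b (mem_behead (s := a :: s) bs)).
by exists (k :: u) => // x; rewrite in_cons => /orP [/eqP ->|/uN].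
Qed.

End Atoms.

Lemma power_is_atom n d N k : (1 < n)%N -> (1 < d)%N -> coprime n d -> N k ->
  atom (expPuiseux (n%:R / d%:R) N) ((n%:R / d%:R) ^+ k).
Proof.
move=> n_gt1 d_gt1 cnd Nk; set r := n%:R / d%:R.
have r_gt0 : 0 < r by rewrite divr_gt0 // ltr0n ltnW.
split; [exact: expPuiseux_pow | by rewrite gt_eqF // exprn_gt0 |].
move=> b c [s [_ ->]] [t [_ ->]] E.
have [->|s_ne] := eqVneq s [::]; first by left; rewrite big_nil.
have [->|t_ne] := eqVneq t [::]; first by right; rewrite big_nil.
have [M /andP [kM stM]] := exponent_bound (k :: s ++ t).
have kM' : all (fun x => (x <= M)%N) [:: k] by rewrite /= kM.
have : powsum r (s ++ t) = powsum r [:: k] by rewrite /powsum big_cat big_seq1 E.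
rewrite (powsum_eq_cval _ _ stM kM') ?(ltnW d_gt1) // => E'.
have st_bounded : bounded M 0 (s ++ t).
  by apply/allP => x /(allP stM) xM; rewrite leq0n.
have E'' := cval_singleton (ltnW n_gt1) (ltnW d_gt1) cnd n_gt1 d_gt1 kM st_bounded E'.
by move: s_ne t_ne E''; clear; case: s => [|x [|y s]] // _ t_ne [_ t0]; rewrite t0 in t_ne.
Qed.

Lemma Uk_exponents n d N k m : (1 < n)%N -> (1 < d)%N -> coprime n d ->
  Uk (expPuiseux (n%:R / d%:R) N) k m <-> (0 < m)%N /\
  exists u v : seq nat, [/\ size u = k, size v = m, (forall x, x \in u -> N x),
    (forall x, x \in v -> N x) & powsum (n%:R / d%:R) u = powsum (n%:R / d%:R) v].
Proof.
move=> n_gt1 d_gt1 cnd; set r := n%:R / d%:R.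
have r_gt0 : 0 < r by rewrite divr_gt0 // ltr0n ltnW.
split=> [[m_gt0 [s [t [sk tm s_atoms t_atoms E]]]] | [m_gt0 [u [v [uk vm uN vN E]]]]].
  have [u uN sE] := atoms_are_powers r_gt0 s_atoms.
  have [v vN tE] := atoms_are_powers r_gt0 t_atoms.
  subst s t; split=> //; exists u, v; rewrite -sk -tm !size_map; split=> //.
  by move: E; rewrite !big_map.
split=> //; exists (map (fun k => r ^+ k) u), (map (fun k => r ^+ k) v).
split; rewrite ?size_map ?big_map //.
  by move=> a /mapP [x /uN Nx ->]; apply: power_is_atom.
by move=> a /mapP [x /vN Nx ->]; apply: power_is_atom.
Qed.

Lemma Uk_arith_seq n d N k : (1 < n)%N -> (1 < d)%N -> coprime n d ->
  numerical_monoid N -> (0 < k)%N ->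
  arith_seq (Uk (expPuiseux (n%:R / d%:R) N) k) `|n - d|%N.
Proof.
move=> n_gt1 d_gt1 cnd [N0 _ [B NB]] k_gt0; set r := n%:R / d%:R.
have [n_gt0 d_gt0] := (ltnW n_gt1, ltnW d_gt1).
apply: (arith_seq_of_linked (k := k)).
  apply/Uk_exponents => //; split=> //; exists (nseq k 0%N), (nseq k 0%N).
  by split; rewrite ?size_nseq // => x /nseqP [->].
move=> m /Uk_exponents [] // _ [u [v [uk vm uN vN E]]]; subst k m.
have [M /allP uvM] := exponent_bound (u ++ v); set shift := map (addn B).
have shift_bounded s : {subset s <= u ++ v} -> bounded (B + M) B (shift s).
  move=> suv; apply/allP => _ /mapP [x /suv xuv ->].
  by rewrite leq_addr leq_add2l uvM.
have bu : bounded (B + M) B (shift u) by apply: shift_bounded => x xu; rewrite mem_cat xu.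
have bv : bounded (B + M) B (shift v).
  by apply: shift_bounded => x xv; rewrite mem_cat xv orbT.
have below s : bounded (B + M) B s -> all (fun x => (x <= B + M)%N) s.
  by move=> /allP bs; apply/allP => x /bs /andP [].
have shift_N s : bounded (B + M) B s -> forall x, x \in s -> N x.
  by move=> /allP bs x /bs /andP [Bx _]; apply: NB.
have E' : cval n d (B + M) (shift u) = cval n d (B + M) (shift v).
  by apply/(powsum_eq_cval _ _ (below _ bu) (below _ bv)); rewrite // !powsum_shift E.
have := linked_sizes n_gt0 d_gt0 cnd bu bv E'; rewrite !size_map.
apply: linked_mono => m' [w [bw wE wm']]; apply/Uk_exponents => //; split.
  case: w {bw} wE wm' => [|x w] wE <- //; rewrite /cval big_nil in wE.
  by move: k_gt0; rewrite -(size_map (addn B)) -/(shift u) (cval_eq0 n_gt0 d_gt0 cnd (esym wE)).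
exists (shift u), w; split; rewrite ?size_map //; try exact: shift_N.
by apply/(powsum_eq_cval _ _ (below _ bu) (below _ bw)); rewrite // wE.
Qed.

Section IntegralBase.

Variables (n : nat) (N : nat -> Prop).
Hypothesis N0 : N 0%N.

Lemma expPuiseux_nat x : expPuiseux n%:R N x <-> exists p : nat, x = p%:R.
Proof.
split=> [[s [_ ->]] | [p ->]].
  by exists (\sum_(k <- s) n ^ k)%N; rewrite natr_sum; apply: eq_bigr => k _; rewrite natrX.
exists (nseq p 0%N); split; first by move=> k /nseqP [->].
by rewrite -/(powsum _ _) powsum_nseq expr0 mulr1.
Qed.

Lemma atom_nat_base a : atom (expPuiseux n%:R N) a <-> a = 1.
Proof.
split=> [[/expPuiseux_nat [p ->] p_ne0 a_atom] | ->].
  have p_gt0 : (0 < p)%N by rewrite lt0n -(pnatr_eq0 rat).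
  have S1 : expPuiseux n%:R N 1 by apply/expPuiseux_nat; exists 1%N.
  have Sp : expPuiseux n%:R N p.-1%:R by apply/expPuiseux_nat; exists p.-1.
  have pE : p%:R = 1 + p.-1%:R :> rat by rewrite addrC natr1 prednK.
  case: (a_atom _ _ S1 Sp pE) => /eqP; first by rewrite oner_eq0.
  by rewrite pnatr_eq0 => /eqP p1; rewrite -(prednK p_gt0) p1.
split; [by apply/expPuiseux_nat; exists 1%N | exact: oner_neq0 |].
move=> _ _ /expPuiseux_nat [p ->] /expPuiseux_nat [q ->] /eqP.
rewrite -natrD -[X in X == _]/(1%:R) eqr_nat => /eqP pq.
by case: p pq => [|p] pq; [left | right; have -> : q = 0%N by lia].
Qed.

(* Every factorization of an element of N has length equal to its value. *)
Lemma Uk_nat_base k m : (0 < k)%N -> (Uk (expPuiseux n%:R N) k m <-> m = k).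
Proof.
move=> k_gt0.
have sum_atoms (s : seq rat) : (forall a, a \in s -> atom (expPuiseux n%:R N) a) ->
    \sum_(a <- s) a = (size s)%:R.
  move=> s_atoms; rewrite (eq_big_seq (fun _ => 1)) ?big_const_seq.
    by rewrite count_predT -[in RHS](iter_addr_0 (size s)) ?natr1.
  by move=> a /s_atoms /atom_nat_base.
split=> [[_ [s [t [sk tm s_atoms t_atoms]]]] | ->].
  by rewrite !sum_atoms // => /eqP; rewrite eqr_nat sk tm => /eqP.
split=> //; exists (nseq k 1), (nseq k 1).
by split; rewrite ?size_nseq // => a /nseqP [-> _]; apply/atom_nat_base.
Qed.

End IntegralBase.

(* When r = 1 / d with d > 1, each generator r ^+ j splits as
   r ^+ J + (d ^ (J - j) - 1) * r ^+ J for a large J in N: there are no atoms. *)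
Lemma unit_numerator_no_atom d N a : (1 < d)%N -> numerical_monoid N ->
  ~ atom (expPuiseux d%:R^-1 N) a.
Proof.
move=> d_gt1 [_ _ [B NB]] a_atom; set r : rat := d%:R^-1 in a_atom.
have r_gt0 : 0 < r by rewrite invr_gt0 ltr0n ltnW.
have [j Nj aE] := atom_is_power r_gt0 a_atom.
set J := maxn B j.+1; have NJ : N J by apply: NB; rewrite leq_maxl.
have jJ : (j < J)%N by rewrite leq_maxr.
set D := (d ^ (J - j))%N.
have D_gt1 : (1 < D)%N by rewrite -[1%N](expn0 d) ltn_exp2l // subn_gt0.
have aJ : a = r ^+ J + D.-1%:R * r ^+ J.
  rewrite -{1}[r ^+ J]mul1r -mulrDl addrC natr1 prednK ?(ltnW D_gt1) //.
  rewrite aE /D -(subnKC (ltnW jJ)) exprD mulrCA natrX addKn -exprMn.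
  by rewrite mulfV ?expr1n ?mulr1 // pnatr_eq0 -lt0n ltnW.
have SJ : expPuiseux r N (D.-1%:R * r ^+ J).
  by exists (nseq D.-1 J); split; [move=> k /nseqP [->] | rewrite -/(powsum _ _) powsum_nseq].
case: a_atom => _ _ /(_ _ _ (expPuiseux_pow r NJ) SJ aJ) [/eqP|/eqP].
  by rewrite gt_eqF // exprn_gt0.
rewrite mulf_eq0 pnatr_eq0 (gt_eqF (exprn_gt0 J r_gt0)) orbF.
by case: (D) D_gt1 => [|[|]].
Qed.

(* Hence 1 = r ^ 0, which is nonzero, has no factorization into atoms. *)
Lemma unit_numerator_not_atomic d N : (1 < d)%N -> numerical_monoid N ->
  ~ atomic (expPuiseux d%:R^-1 N).
Proof.
move=> d_gt1 NM; have [N0 _ _] := NM.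
move/(_ _ (expPuiseux_pow _ N0) (oner_neq0 _)).
case=> [[|a s] [s_atoms]]; first by rewrite big_nil expr0 => /eqP; rewrite oner_eq0.
by move=> _; apply: (unit_numerator_no_atom d_gt1 NM (s_atoms a (mem_head a s))).
Qed.

Theorem mainTheorem4 (r : rat) (N : nat -> Prop) :
  0 < r -> numerical_monoid N -> atomic (expPuiseux r N) ->
  forall k : nat, (0 < k)%N ->
    arith_seq (Uk (expPuiseux r N) k) (absz (numq r - denq r)).
Proof.
move=> r_gt0 NM S_atomic k k_gt0.
have [n Hn] : exists n : nat, numq r = n%:Z.
  by exists (absz (numq r)); rewrite gez0_abs // ltW // numq_gt0.
have [d Hd] : exists d : nat, denq r = d%:Z by exists (absz (denq r)); rewrite gez0_abs.
have n_gt0 : (0 < n)%N by rewrite -(ltz_nat 0) -Hn numq_gt0.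
have d_gt0 : (0 < d)%N by rewrite -(ltz_nat 0) -Hd denq_gt0.
have cnd : coprime n d by have := coprime_num_den r; rewrite Hn Hd.
have rE : r = n%:R / d%:R by rewrite -[LHS]divq_num_den Hn Hd.
rewrite Hn Hd; subst r.
have [d_gt1|d_le1] := ltnP 1 d; last first.
  have -> : d = 1%N by lia.
  rewrite divr1; apply: (arith_seq_singleton (k := k)) => m.
  by case: NM => N0 _ _; apply: Uk_nat_base.
have [n_gt1|n_le1] := ltnP 1 n; first exact: Uk_arith_seq.
have n1 : n = 1%N by lia.
by move: S_atomic; rewrite n1 div1r => /unit_numerator_not_atomic; case.
Qed.
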